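(* Let $q$ be a prime power and $r\ge 0$, $v$ integers. There exists a spanning projective $(r+1)$-cylinder in $\mathrm{PG}(v-1,q)$ if and only if $r+2\le v\le r+q$.
   Context: $\mathrm{PG}(v-1,q)$ is the projective space of $\mathbb{F}_q^v$; a $k$-space is a $k$-dimensional subspace of $\mathbb{F}_q^v$ (points are $1$-spaces, hyperplanes are $(v-1)$-spaces). An $(r+1)$-cylinder is a multiset of $q^{r+1}$ points which arises as the union (counted with multiplicity) of the point sets $L_1\setminus F,\dots,L_q\setminus F$, where $L_1,\dots,L_q$ are $(r+1)$-spaces and $F$ is an $r$-space contained in every $L_i$ (here $L_i\setminus F$ means the set of points of $L_i$ not contained in $F$). The cylinder is called projective if this multiset is a set (no point has multiplicity $>1$), and spanning if its points span $\mathbb{F}_q^v$. *)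

From HB Require Import structures.
From mathcomp Require Import all_boot all_order all_algebra all_field.
Set Implicit Arguments. Unset Strict Implicit. Unset Printing Implicit Defensive.
Import GRing.Theory.
Local Open Scope ring_scope.

(* PG(v-1,q) is modelled as the lattice of subspaces of F^v = 'rV[F]_v,
   with F a finite field of order q = #|F|.  A k-space is a subspace of
   dimension k; points are 1-spaces. *)

Section Cylinders.
Variables (F : finFieldType) (v : nat).
Local Notation V := 'rV[F]_v.

Definition is_point (P : {vspace V}) : bool := \dim P == 1%N.

(* multiplicity of the point P in the multiset union of the L_i \ Fs *)
Definition cyl_mult (Fs : {vspace V}) (L : 'I_#|F| -> {vspace V})
    (P : {vspace V}) : nat :=
  #|[set i : 'I_#|F| | (P <= L i)%VS && ~~ (P <= Fs)%VS]|.

Definition is_cylinder (r : nat) (Fs : {vspace V}) (L : 'I_#|F| -> {vspace V})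
    : Prop :=
  \dim Fs = r /\ forall i, \dim (L i) = r.+1 /\ (Fs <= L i)%VS.

Definition cyl_projective (Fs : {vspace V}) (L : 'I_#|F| -> {vspace V}) : Prop :=
  forall P, is_point P -> (cyl_mult Fs L P <= 1)%N.

Definition cyl_spanning (Fs : {vspace V}) (L : 'I_#|F| -> {vspace V}) : Prop :=
  forall U : {vspace V},
    (forall P, is_point P -> (0 < cyl_mult Fs L P)%N -> (P <= U)%VS) ->
    U = fullv.

End Cylinders.

From HB Require Import structures.
From mathcomp Require Import all_boot all_order all_algebra all_field.
From mathcomp Require Import zify.
Set Implicit Arguments. Unset Strict Implicit. Unset Printing Implicit Defensive.
Import GRing.Theory.
Local Open Scope ring_scope.

(* The proof rests on two reformulations, valid for any cylinder with base
   the r-space Fs and spaces L_1,...,L_q, each L_i a one-dimensional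
   extension of Fs:
   - the cylinder is projective iff the map i |-> L_i is injective, because
     a point of L_i outside Fs spans L_i together with Fs;
   - the cylinder is spanning iff L_1 + ... + L_q is the whole space, because
     every vector of L_i is a sum of vectors of L_i outside Fs.
   Necessity: q one-dimensional extensions of Fs span at most r + q
   dimensions, and if v = r + 1 all the L_i are the whole space, so they
   are not distinct (q >= 2).  Sufficiency: with m = v - r, 2 <= m <= q,
   take Fs = W r spanned by the first r unit vectors e_0,...,e_(r-1) and
   L_i = Fs + <dir i>, where dir i = e_(r+i) for 0 < i < m and
   dir i = e_r + c_i e_(r+1) otherwise, for an enumeration c of the field.
   The directions are pairwise independent modulo Fs and span F^v modulo Fs. *)

Section OneDimensionalExtensions.
Variables (K : fieldType) (vT : vectType K).
Implicit Types (Fs U L P : {vspace vT}) (x : vT).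

Lemma dimv_add_line U x : x \notin U -> \dim (U + <[x]>) = (\dim U).+1.
Proof.
move=> xU; have x0 : x != 0 by apply: contraNneq xU => ->; rewrite mem0v.
have dim_le : (\dim (U + <[x]>) <= (\dim U).+1)%N.
  by have [le _] := dimv_add_leqif U <[x]>; rewrite dim_vline x0 addn1 in le.
have dim_gt : (\dim U < \dim (U + <[x]>))%N.
  by rewrite (ltn_leqif (dimv_leqif_sup (addvSl U _))) subv_add subvv -memvE.
by apply/eqP; rewrite eqn_leq dim_le dim_gt.
Qed.

Lemma ext_witness Fs L : \dim L = (\dim Fs).+1 -> exists2 x, x \in L & x \notin Fs.
Proof. by move=> dimL; apply/subvPn/negP => /dimvS; rewrite dimL ltnn. Qed.

Lemma ext_generated Fs L P : (Fs <= L)%VS -> \dim L = (\dim Fs).+1 ->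
  (P <= L)%VS -> ~~ (P <= Fs)%VS -> (Fs + P)%VS = L.
Proof.
move=> sFL dimL sPL nsPF; apply/eqP; rewrite eqEdim subv_add sFL sPL dimL /=.
by rewrite (ltn_leqif (dimv_leqif_sup (addvSl Fs P))) subv_add subvv.
Qed.

Lemma dimv_add_ext Fs U L : (Fs <= U)%VS -> (Fs <= L)%VS ->
  \dim L = (\dim Fs).+1 -> (\dim (U + L) <= (\dim U).+1)%N.
Proof.
move=> sFU sFL dimL; have capF : (Fs <= U :&: L)%VS by rewrite subv_cap sFU sFL.
by have := dimvS capF; have := dimv_sum_cap U L; rewrite dimL; lia.
Qed.

Lemma dimv_sum_ext (I : Type) Fs (L : I -> {vspace vT}) (s : seq I) :
  (forall i, (Fs <= L i)%VS /\ \dim (L i) = (\dim Fs).+1) ->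
  (\dim (Fs + \sum_(i <- s) L i) <= \dim Fs + size s)%N.
Proof.
move=> extL; elim: s => [|i s IH]; first by rewrite big_nil addv0 addn0.
have [sFL dimL] := extL i.
rewrite big_cons addvA [(Fs + _)%VS]addvC -addvA addvC addnS.
exact: leq_trans (dimv_add_ext (addvSl _ _) sFL dimL) _.
Qed.

End OneDimensionalExtensions.

Section Coordinates.
Variables (K : fieldType) (v : nat).
Local Notation V := 'rV[K]_v.

Lemma dim_rV : \dim {:V} = v.
Proof. by rewrite dimvf dim_matrix mul1r. Qed.

(* The j-th unit vector (zero when j >= v). *)
Definition e (j : nat) : V := \row_k ((k : nat) == j)%:R.

Definition W (n : nat) : {vspace V} := (\sum_(j < n) <[e j]>)%VS.

Lemma W_coord n u (k : 'I_v) : u \in W n -> (n <= k)%N -> u 0 k = 0.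
Proof.
elim: n u => [|n IH] u; first by rewrite /W big_ord0 memv0 => /eqP-> _; rewrite mxE.
rewrite /W big_ord_recr /= => /memv_addP [u1 Wu1 [u2 /vlineP [a ->] ->]] nk.
by rewrite !mxE (IH u1 Wu1 (ltnW nk)) (gtn_eqF nk) mulr0 addr0.
Qed.

Lemma e_inW j n : (j < n)%N -> e j \in W n.
Proof. by move=> jn; rewrite memvE (sumv_sup (Ordinal jn)) //= -memvE memv_line. Qed.

Lemma W_sub n (U : {vspace V}) : (forall j, (j < n)%N -> e j \in U) -> (W n <= U)%VS.
Proof. by move=> eU; apply/subv_sumP => j _; rewrite -memvE eU. Qed.

Lemma dimW n : (n <= v)%N -> \dim (W n) = n.
Proof.
elim: n => [|n IH] nv; first by rewrite /W big_ord0 dimv0.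
rewrite /W big_ord_recr /= dimv_add_line ?IH ?(ltnW nv) //.
apply/negP => /(W_coord (k := Ordinal nv))/(_ (leqnn n)); rewrite mxE eqxx.
by apply/eqP; rewrite oner_eq0.
Qed.

Lemma W_full : W v = fullv.
Proof. by apply/eqP; rewrite eqEdim subvf dim_rV dimW ?leqnn. Qed.

Lemma W_line_coord r y u : u \in (W r + <[y]>)%VS ->
  exists a, forall k : 'I_v, (r <= k)%N -> u 0 k = a * y 0 k.
Proof.
case/memv_addP => [w Ww [z /vlineP [a ->] ->]]; exists a => k rk.
by rewrite !mxE (W_coord Ww rk) add0r.
Qed.

End Coordinates.
Arguments e {K v} j.
Arguments W {K v} n.

Section CylinderStructure.
Variables (F : finFieldType) (v r : nat).
Local Notation V := 'rV[F]_v.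
Local Notation q := #|F|.

Lemma line_is_point (U : {vspace V}) x : x \notin U -> is_point <[x]>.
Proof.
move=> xU; have x0 : x != 0 by apply: contraNneq xU => ->; rewrite mem0v.
by rewrite /is_point dim_vline x0.
Qed.

Variables (Fs : {vspace V}) (L : 'I_q -> {vspace V}).
Hypothesis cylL : is_cylinder r Fs L.

Lemma cyl_ext i : (Fs <= L i)%VS /\ \dim (L i) = (\dim Fs).+1.
Proof. by have [dimF /(_ i) [dimL sFL]] := cylL; rewrite dimL dimF. Qed.

Lemma cyl_mult_line i x : x \in L i -> x \notin Fs -> (0 < cyl_mult Fs L <[x]>)%N.
Proof. by move=> xL xF; apply/card_gt0P; exists i; rewrite inE -!memvE xL. Qed.

Lemma cyl_projectiveP : cyl_projective Fs L <-> injective L.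
Proof.
split=> [proj i j eqLij | injL P _].
  have [_ dimL] := cyl_ext i; have [x xL xF] := ext_witness dimL.
  apply/eqP; apply: contraTT (proj _ (line_is_point xF)) => neq_ij.
  rewrite -ltnNge; apply/card_gt1P; exists i, j.
  by rewrite !inE -!memvE -eqLij xL xF.
rewrite leqNgt; apply/card_gt1P => -[i [j [+ + neq_ij]]].
rewrite !inE => /andP [sPLi nsPF] /andP [sPLj _]; case/eqP: neq_ij; apply: injL.
have [sFLi dimLi] := cyl_ext i; have [sFLj dimLj] := cyl_ext j.
by rewrite -(ext_generated sFLi dimLi sPLi nsPF) (ext_generated sFLj dimLj sPLj nsPF).
Qed.

Lemma cyl_points_subP (U : {vspace V}) :
  (forall P, is_point P -> (0 < cyl_mult Fs L P)%N -> (P <= U)%VS)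
  <-> (\sum_i L i <= U)%VS.
Proof.
split=> [ptsU | sLU P _ /card_gt0P [i]]; last first.
  by rewrite inE => /andP [sPL _]; apply: subv_trans sLU; exact: sumv_sup sPL.
apply/subv_sumP => i _; have [_ dimL] := cyl_ext i.
have outside y : y \in L i -> y \notin Fs -> y \in U.
  by move=> yL yF; rewrite memvE ptsU ?(line_is_point yF) ?(cyl_mult_line yL yF).
have [x xL xF] := ext_witness dimL; have xU := outside x xL xF.
apply/subvP => y yL; have [yF | /(outside y yL)//] := boolP (y \in Fs).
(* a vector y of Fs is the difference of (y + x) and x, both outside Fs *)
have yxL : y + x \in L i by exact: memvD.
have yxF : y + x \notin Fs.
  by apply: contra xF => yxF; rewrite -[x](addKr y) memvD ?memvN.
by rewrite -(addrK x y) memvB // outside.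
Qed.

Lemma cyl_spanningP : cyl_spanning Fs L <-> (\sum_i L i)%VS = fullv.
Proof.
split=> [span | sumL U ptsU]; first exact/span/cyl_points_subP.
by apply/eqP; rewrite eqEsubv subvf -sumL; apply/cyl_points_subP.
Qed.

(* A projective cylinder needs v >= r + 2: otherwise all L i are the whole space. *)
Lemma cyl_dim_lower : injective L -> (r + 2 <= v)%N.
Proof.
move=> injL; have q_gt1 : (1 < q)%N := card_finNzRing_gt1 F.
have dimF : \dim Fs = r by case: cylL.
have full_if_tight i : r.+1 = v -> L i = fullv.
  have [_ dimL] := cyl_ext i.
  by move=> vE; apply/eqP; rewrite eqEdim subvf dimL dimF dim_rV vE leqnn.
have [_ dimL] := cyl_ext (Ordinal q_gt1).
have r_lt_v : (r < v)%N by have := dimvS (subvf (L (Ordinal q_gt1))); rewrite dimL dimF dim_rV.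
rewrite addn2 ltn_neqAle r_lt_v andbT; apply/eqP => vE.
have := injL (Ordinal (ltnW q_gt1)) (Ordinal q_gt1).
by rewrite !full_if_tight // => /(_ erefl) /(congr1 val).
Qed.

(* A spanning cylinder needs v <= r + q: the q extensions of Fs span r + q dimensions. *)
Lemma cyl_dim_upper : (\sum_i L i)%VS = fullv -> (v <= r + q)%N.
Proof.
move=> sumL; have dimF : \dim Fs = r by case: cylL.
have := dimv_sum_ext (enum 'I_q) cyl_ext.
rewrite big_enum sumL size_enum_ord dimF.
by rewrite (_ : (Fs + fullv)%VS = fullv) ?dim_rV //; apply/eqP; rewrite eqEsubv subvf addvSr.
Qed.

End CylinderStructure.

Section Construction.
Variables (F : finFieldType) (v r : nat).
Local Notation V := 'rV[F]_v.
Local Notation q := #|F|.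
Hypothesis bounds : (r + 2 <= v <= r + q)%N.

Definition small (i : 'I_q) : bool := (0 < i < v - r)%N.
Definition dir (i : 'I_q) : V :=
  if small i then e (r + i) else e r + enum_val i *: e (r + 1).

Definition Lcyl (i : 'I_q) : {vspace V} := (W r + <[dir i]>)%VS.

Lemma dir_coord i (k : 'I_v) : dir i 0 k =
  if small i then ((k : nat) == r + i)%:R
  else ((k : nat) == r)%:R + enum_val i * ((k : nat) == r + 1)%:R.
Proof. by rewrite /dir; case: ifP => _; rewrite !mxE. Qed.

Lemma r_lt_v : (r < v)%N. Proof. lia. Qed.
Lemma r1_lt_v : (r + 1 < v)%N. Proof. lia. Qed.

(* No direction lies in the base W r: its coordinate r or r + i is 1. *)
Lemma dir_notinW i : dir i \notin W r.
Proof.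
apply/negP; case small_i: (small i).
  have rv : (r + i < v)%N by move: small_i; rewrite /small; lia.
  move/(W_coord (k := Ordinal rv))/(_ (leq_addr _ _)); rewrite dir_coord small_i.
  by rewrite eqxx => /eqP; rewrite oner_eq0.
move/(W_coord (k := Ordinal r_lt_v))/(_ (leqnn r)); rewrite dir_coord small_i.
have r_r1 : (r == r + 1)%N = false by lia.
by rewrite /= eqxx r_r1 mulr0 addr0 => /eqP; rewrite oner_eq0.
Qed.

Lemma dir_notin i j : i != j -> dir j \notin Lcyl i.
Proof.
move=> neq_ij; apply/negP => /W_line_coord [a coord_eq].
have r_r1 : (r == r + 1)%N = false by lia.
have r1_r : (r + 1 == r)%N = false by lia.
have small_coord k : small k -> (r + k < v)%N /\ (r == r + k)%N = false.
  by rewrite /small; split; lia.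
have at_r := coord_eq (Ordinal r_lt_v) (leqnn r).
have at_r1 := coord_eq (Ordinal r1_lt_v) (leq_addr 1 r).
rewrite !dir_coord /= eqxx r_r1 in at_r; rewrite !dir_coord /= eqxx r1_r in at_r1.
case small_i: (small i); case small_j: (small j);
  rewrite small_i small_j ?mulr1n ?mulr0n ?mulr0 ?addr0 ?add0r ?mulr1 in at_r at_r1.
- have [rj _] := small_coord j small_j.
  have := coord_eq (Ordinal rj) (leq_addr _ _); rewrite !dir_coord small_i small_j /=.
  have -> : (r + j == r + i)%N = false.
    by rewrite eqn_add2l; apply: contraNF neq_ij; rewrite eq_sym.
  by rewrite eqxx mulr0 => /eqP; rewrite oner_eq0.
- have [_ r_ri] := small_coord i small_i.
  by move: at_r; rewrite r_ri mulr0 => /eqP; rewrite oner_eq0.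
- have [rj r_rj] := small_coord j small_j.
  move: at_r; rewrite r_rj mulr0n => a0.
  have := coord_eq (Ordinal rj) (leq_addr _ _); rewrite !dir_coord small_i small_j /=.
  by rewrite eqxx -a0 mul0r => /eqP; rewrite oner_eq0.
- move: at_r1; rewrite -at_r mul1r => /enum_val_inj eq_ji.
  by rewrite eq_ji eqxx in neq_ij.
Qed.

Lemma Lcyl_cylinder : is_cylinder r (W r) Lcyl.
Proof.
have r_le_v : (r <= v)%N by lia.
split=> [|i]; first exact: dimW.
rewrite /Lcyl dimv_add_line; last exact: dir_notinW.
by rewrite dimW ?addvSl.
Qed.

Lemma Lcyl_injective : injective Lcyl.
Proof.
move=> i j eqLij; apply/eqP/negPn/negP => neq_ij.
by have := dir_notin neq_ij; rewrite eqLij /Lcyl memvE addvSr.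
Qed.

Lemma Lcyl_sum : (\sum_i Lcyl i)%VS = fullv.
Proof.
have q_gt1 : (1 < q)%N := card_finNzRing_gt1 F.
pose i0 : 'I_q := Ordinal (ltnW q_gt1); pose i1 : 'I_q := Ordinal q_gt1.
have dirS k : dir k \in (\sum_i Lcyl i)%VS.
  by rewrite memvE (sumv_sup k) // /Lcyl addvSr.
have WS : (W r <= \sum_i Lcyl i)%VS by rewrite (sumv_sup i0) // /Lcyl addvSl.
apply/eqP; rewrite eqEsubv subvf -W_full /=; apply: W_sub => j jv.
case: (ltngtP j r) => [jr | rj | ->]; first by apply: (subvP WS); exact: e_inW.
  have jq : (j - r < q)%N by lia.
  (* for r < j, e_j is the direction of the small index j - r *)
  have := dirS (Ordinal jq); rewrite /dir /small /=.
  by rewrite (_ : (0 < j - r < v - r)%N) ?subnKC //; [exact: ltnW | lia].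
(* e_r = dir i0 - c_(i0) dir i1, as i0 is large and dir i1 = e_(r+1) *)
have dir0 : dir i0 = e r + enum_val i0 *: e (r + 1) by [].
have dir1 : dir i1 = e (r + 1) by rewrite /dir /small /= (_ : (1 < v - r)%N) //; lia.
by rewrite -(addrK (enum_val i0 *: e (r + 1)) (e r)) -dir0 -dir1 memvB ?memvZ.
Qed.

End Construction.

Theorem mainTheorem1 (F : finFieldType) (r v : nat) :
  (exists (Fs : {vspace 'rV[F]_v}) (L : 'I_#|F| -> {vspace 'rV[F]_v}),
      is_cylinder r Fs L /\ cyl_projective Fs L /\ cyl_spanning Fs L)
  <-> (r + 2 <= v <= r + #|F|)%N.
Proof.
split=> [[Fs [L [cylL [proj span]]]] | bounds].
  rewrite (cyl_dim_lower cylL (proj1 (cyl_projectiveP cylL) proj)).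
  exact: cyl_dim_upper cylL (proj1 (cyl_spanningP cylL) span).
have cylL := Lcyl_cylinder bounds.
exists (W r), (Lcyl v r); split=> //; split.
  exact/(cyl_projectiveP cylL)/Lcyl_injective.
exact/(cyl_spanningP cylL)/Lcyl_sum.
Qed.
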